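(* Let $\mathbf{A}$ be a Bochvar algebra whose $\{\wedge,\vee,\neg,0,1\}$-reduct is the Płonka sum of Boolean algebras $\mathbf{A}_i$ ($i\in I$) over the semilattice $\langle I,\vee,i_0\rangle$. Let $K=\{J_2^{\mathbf{A}}(1^{A_i}):i\in I\}$, where $1^{A_i}$ is the top element of $\mathbf{A}_i$. Then $\langle\mathbf{A}_{i_0},K\rangle$ is a Bochvar system. That is: - $\mathbf{A}_{i_0}$ is a Boolean algebra; - $K\subseteq A_{i_0}$; - $1\in K$; - $K$ is closed under the meet of $\mathbf{A}_{i_0}$.
   Context: $\mathbf{WK}^e$ is the three-element algebra on $\{0,\tfrac12,1\}$ of type $\langle\wedge,\vee,\neg,J_2,0,1\rangle$. Its operations are: - $\neg$ swaps $0,1$ and fixes $\tfrac12$; - $\wedge,\vee$ are Boolean on $\{0,1\}$ and return $\tfrac12$ whenever some argument is $\tfrac12$; - $J_2(1)=1$ and $J_2(\tfrac12)=J_2(0)=0$. Bochvar algebras are the members of $ISP(\mathbf{WK}^e)$. The $\{\wedge,\vee,\neg,0,1\}$-reduct of any Bochvar algebra is an involutive bisemilattice. Hence it is (canonically, up to isomorphism) the Płonka sum of a semilattice direct system of Boolean algebras over a join-semilattice $I$ with least element $i_0$. The Płonka sum has universe the disjoint union of the fibres $A_i$. Operations are computed by mapping the arguments via the system homomorphisms $p_{ij}$ into the fibre indexed by the join of their indices; constants come from $\mathbf{A}_{i_0}$. A Bochvar system is a pair $\langle\mathbf{B},\mathbf{I}\rangle$ with $\mathbf{B}$ a Boolean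 algebra and $I\subseteq B$ containing $1$ and closed under $\wedge$. *)

From HB Require Import structures.
From mathcomp Require Import all_boot all_order.

Set Implicit Arguments.
Unset Strict Implicit.
Unset Printing Implicit Defensive.

Import Order.Theory.
Local Open Scope order_scope.

Inductive wk3 : Type := W0 | Wh | W1.

Definition wk_neg (x : wk3) : wk3 :=
  match x with W0 => W1 | Wh => Wh | W1 => W0 end.

Definition wk_meet (x y : wk3) : wk3 :=
  match x, y with
  | Wh, _ | _, Wh => Wh
  | W1, W1 => W1
  | _, _ => W0
  end.

Definition wk_join (x y : wk3) : wk3 :=
  match x, y with
  | Wh, _ | _, Wh => Wh
  | W0, W0 => W0
  | _, _ => W1
  end.

Definition wk_J2 (x : wk3) : wk3 :=
  match x with W1 => W1 | _ => W0 end.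

(** An algebra (A, meet, join, neg, J2, 0, 1) is a Bochvar algebra iff it is in
    ISP(WK^e), i.e. it embeds (injective homomorphism) into a direct power
    X -> wk3 of WK^e. *)
Definition is_bochvar (A : Type) (meet join : A -> A -> A) (neg J2 : A -> A)
    (zero one : A) : Prop :=
  exists (X : Type) (h : A -> X -> wk3),
    injective h /\
    (forall a b x, h (meet a b) x = wk_meet (h a x) (h b x)) /\
    (forall a b x, h (join a b) x = wk_join (h a x) (h b x)) /\
    (forall a x, h (neg a) x = wk_neg (h a x)) /\
    (forall a x, h (J2 a) x = wk_J2 (h a x)) /\
    (forall x, h zero x = W0) /\
    (forall x, h one x = W1).

(** Semilattice direct system of Boolean algebras B i (i in the join
    semilattice I with least element \bot = i0), with homomorphisms
    p i j : B i -> B j for i <= j. *)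
Definition semilattice_direct_system (dI : Order.disp_t)
    (I : bJoinSemilatticeType dI) (dB : Order.disp_t)
    (B : I -> ctbDistrLatticeType dB) (p : forall i j : I, B i -> B j) : Prop :=
  (forall i (x : B i), p i i x = x) /\
  (forall (i j k : I) (x : B i), i <= j -> j <= k -> p j k (p i j x) = p i k x) /\
  (forall i j : I, i <= j ->
     (forall x y : B i, p i j (x `&` y) = p i j x `&` p i j y) /\
     (forall x y : B i, p i j (x `|` y) = p i j x `|` p i j y) /\
     (forall x : B i, p i j (~` x) = ~` p i j x) /\
     p i j \bot = \bot /\ p i j \top = \top).

Definition psum (dI : Order.disp_t) (I : bJoinSemilatticeType dI)
    (dB : Order.disp_t) (B : I -> ctbDistrLatticeType dB) : Type :=
  {i : I & B i}.

Definition ps_meet dI (I : bJoinSemilatticeType dI) dB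
    (B : I -> ctbDistrLatticeType dB) (p : forall i j : I, B i -> B j)
    (a b : psum B) : psum B :=
  let k := projT1 a `|` projT1 b in
  existT (fun i => B i) k (p _ k (projT2 a) `&` p _ k (projT2 b)).

Definition ps_join dI (I : bJoinSemilatticeType dI) dB
    (B : I -> ctbDistrLatticeType dB) (p : forall i j : I, B i -> B j)
    (a b : psum B) : psum B :=
  let k := projT1 a `|` projT1 b in
  existT (fun i => B i) k (p _ k (projT2 a) `|` p _ k (projT2 b)).

Definition ps_neg dI (I : bJoinSemilatticeType dI) dB
    (B : I -> ctbDistrLatticeType dB) (a : psum B) : psum B :=
  existT (fun i => B i) (projT1 a) (~` projT2 a).

Definition ps_zero dI (I : bJoinSemilatticeType dI) dB
    (B : I -> ctbDistrLatticeType dB) : psum B :=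
  existT (fun i => B i) \bot \bot.

Definition ps_one dI (I : bJoinSemilatticeType dI) dB
    (B : I -> ctbDistrLatticeType dB) : psum B :=
  existT (fun i => B i) \bot \top.

From HB Require Import structures.
From mathcomp Require Import all_boot all_order.
From Stdlib Require Import FunctionalExtensionality.

Import Order.Theory.
Local Open Scope order_scope.

(* J2 takes values in {0, 1} of WK^e, so J2 a absorbs 0 under
   meet; in a Płonka sum, absorbing the constant 0 (which lives in the fibre
   of i0) forces an element into the fibre of i0.  Moreover J2 preserves 1 and
   meets, and the meet of the tops of A_i and A_j is the top of A_(i v j), so
   the meet of J2(1^A_i) and J2(1^A_j) is J2(1^A_(i v j)). *)

Section BochvarAlgebra.

Context {A : Type} {meet join : A -> A -> A} {neg J2 : A -> A} {zero one : A}.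
Hypothesis bochvarA : is_bochvar meet join neg J2 zero one.

Lemma bochvar_J2_meet a b : J2 (meet a b) = meet (J2 a) (J2 b).
Proof.
have [X [h [h_inj [h_meet [_ [_ [h_J2 _]]]]]]] := bochvarA.
apply: h_inj; apply: functional_extensionality => x.
by rewrite h_J2 !h_meet !h_J2; case: (h a x); case: (h b x).
Qed.

Lemma bochvar_J2_one : J2 one = one.
Proof.
have [X [h [h_inj [_ [_ [_ [h_J2 [_ h_one]]]]]]]] := bochvarA.
by apply: h_inj; apply: functional_extensionality => x; rewrite h_J2 h_one.
Qed.

Lemma bochvar_meet_J2_zero a : meet (J2 a) zero = zero.
Proof.
have [X [h [h_inj [h_meet [_ [_ [h_J2 [h_zero _]]]]]]]] := bochvarA.
apply: h_inj; apply: functional_extensionality => x.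
by rewrite h_meet h_J2 h_zero; case: (h a x).
Qed.

End BochvarAlgebra.

Section PlonkaSum.

Context {dI : Order.disp_t} {I : bJoinSemilatticeType dI}.
Context {dB : Order.disp_t} {B : I -> ctbDistrLatticeType dB}.
Context {p : forall i j : I, B i -> B j}.

Local Notation elt := (existT (fun k : I => B k)).

Lemma ps_meet_zero_index a : ps_meet p a (ps_zero B) = ps_zero B -> projT1 a = \bot.
Proof. by move=> /(congr1 (@projT1 _ _)); rewrite /= joinx0. Qed.

Lemma ps_meet_tops (i j : I) :
    (forall k l : I, k <= l -> p k l \top = \top) ->
  ps_meet p (elt i \top) (elt j \top) = elt (i `|` j) \top.
Proof. by move=> p_top; rewrite /ps_meet /= !p_top ?leUl ?leUr ?meetxx. Qed.

Lemma ps_meet_bot_fibre (x y : B \bot) :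
    (forall k (z : B k), p k k z = z) ->
  ps_meet p (elt \bot x) (elt \bot y) = elt \bot (x `&` y).
Proof.
move=> p_id; rewrite /ps_meet /=.
move: (\bot `|` \bot) (joinxx (\bot : I)) => k k_bot.
by subst k; rewrite !p_id.
Qed.

End PlonkaSum.

Theorem theorem3p4 (dI : Order.disp_t) (I : bJoinSemilatticeType dI)
    (dB : Order.disp_t) (B : I -> ctbDistrLatticeType dB)
    (p : forall i j : I, B i -> B j) (J2 : psum B -> psum B) :
  semilattice_direct_system p ->
  is_bochvar (ps_meet p) (ps_join p) (@ps_neg _ _ _ B) J2
    (ps_zero B) (ps_one B) ->
  let K : B \bot -> Prop := fun b =>
    exists i : I, J2 (existT (fun k => B k) i \top) = existT (fun k => B k) \bot b in
  (forall i : I, projT1 (J2 (existT (fun k => B k) i \top)) = \bot) /\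
  K \top /\
  (forall x y : B \bot, K x -> K y -> K (x `&` y)).
Proof.
move=> [p_id [_ p_hom]] bochvarA K.
have p_top i j : i <= j -> p i j \top = \top.
  by move=> /p_hom [_ [_ [_ [_ ->]]]].
split; last split.
- by move=> i; apply: ps_meet_zero_index; apply: (bochvar_meet_J2_zero bochvarA).
- by exists \bot; apply: (bochvar_J2_one bochvarA).
- move=> x y [i J2_i] [j J2_j]; exists (i `|` j).
  by rewrite -(ps_meet_tops i j p_top) (bochvar_J2_meet bochvarA) J2_i J2_j
    (ps_meet_bot_fibre x y p_id).
Qed.
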